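(* Let $a,b$ be integers with $0<b<a$, let $S=\langle a,a+1,\ldots,a+b\rangle$ with conductor $c$, and let $m\ge 2c-1$. Let $M$ be an ordered $(S,m,r)$-amenable subset of $S$ whose shadow has $t$ elements, and let $N$ be another $(S,m,r)$-amenable subset of $S$ whose shadow is an interval of integers containing $m$. Then the shadow of $N$ has at least $t$ elements.
   Context: For $x\in S$, $\mathrm D(x)=\{\alpha\in S\mid x-\alpha\in S\}$. A set $M=\{m_1<\cdots<m_r\}\subseteq S$ with $2c-1\le m=m_1$ is $(S,m,r)$-amenable if $\mathrm D(m_i)\cap[m,\infty)\subseteq M$ for all $i$. The ground is $\{m,m+1,\ldots,m+a+b-1\}$, and the shadow of $M$ is $M\cap\{m,\ldots,m+a+b-1\}$. For a finite $M\subseteq S\cap[m,\infty)$, let $J$ be the set of $j\in\{0,\ldots,a-1\}$ such that $x-(m+b)=qa+j$ for some $x\in M$ and some integer $q\ge 0$; if $J\neq\emptyset$ let $j_0=\max J$ and let the wagon of $M$ be $W=\{x\in M\mid x-(m+b)=qa+j_0\text{ for some integer }q\}$. An element $P\in M$ is the pivot of $M$ if either $P<m+b$ and $P=\max M$, or $P=\max W$. An $(S,m,r)$-amenable set $M$ with pivot $P$ is ordered amenable if (i) its shadow is $\{m,m+1,\ldots,m+t\}$ for some integer $0\le t<a+b-1$, and (ii) whenever $s\in S\setminus M$ is such that $M\cup\{s\}$ is $(S,m,r+1)$-amenable with the same shadow as $M$, we have $s=P+a$. *)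

From mathcomp Require Import all_boot.
Set Implicit Arguments.
Unset Strict Implicit.
Unset Printing Implicit Defensive.

Inductive inS (a b : nat) : nat -> Prop :=
| inS0 : inS a b 0
| inS_add x i : i <= b -> inS a b x -> inS a b (x + (a + i)).

Definition is_conductor (a b c : nat) : Prop :=
  (forall y, c <= y -> inS a b y) /\
  (forall n, (forall y, n <= y -> inS a b y) -> c <= n).

Definition inD (a b x alpha : nat) : Prop :=
  [/\ inS a b alpha, alpha <= x & inS a b (x - alpha)].

(* A finite set M = {m_1 < ... < m_r} is represented by its strictly increasing
   enumeration. *)
Definition amenable (a b c m r : nat) (M : seq nat) : Prop :=
  [/\ sorted ltn M, M != [::], size M = r & head 0 M = m] /\
  [/\ (forall x, x \in M -> inS a b x),
      2 * c - 1 <= m &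
      (forall x, x \in M -> forall alpha, inD a b x alpha -> m <= alpha -> alpha \in M)].

Definition shadow (a b m : nat) (M : seq nat) : seq nat :=
  [seq x <- M | m <= x < m + a + b].

Definition Jset (a b m : nat) (M : seq nat) : seq nat :=
  [seq (x - (m + b)) %% a | x <- M & m + b <= x].

(* wagon: x in M with x - (m+b) = q a + j0 for some integer q *)
Definition wagon (a b m : nat) (M : seq nat) : seq nat :=
  let j0 := \max_(j <- Jset a b m M) j in
  [seq x <- M | x %% a == (m + b + j0) %% a].

Definition is_pivot (a b m : nat) (M : seq nat) (P : nat) : Prop :=
  P \in M /\
  ((P < m + b /\ P = \max_(x <- M) x) \/
   (Jset a b m M != [::] /\ P = \max_(x <- wagon a b m M) x)).

Definition ordered_amenable (a b c m r : nat) (M : seq nat) : Prop :=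
  amenable a b c m r M /\
  exists P, [/\ is_pivot a b m M P,
    (exists t, t < a + b - 1 /\ shadow a b m M =i iota m t.+1) &
    (forall s, inS a b s -> s \notin M ->
       amenable a b c m r.+1 (sort leq (s :: M)) ->
       shadow a b m (sort leq (s :: M)) =i shadow a b m M ->
       s = P + a)].

From mathcomp Require Import all_boot zify.

Set Implicit Arguments.
Unset Strict Implicit.
Unset Printing Implicit Defensive.

(* Write an element above m as m + y with y = q (a + b) + r, r < a + b, and call
   q b + r the level of y; on [0, a + b) the level is the identity.  If the amenable
   set N with interval shadow had fewer than t = t' + 1 shadow elements, its shadow
   would lie below m + t'.  Since amenable sets are closed under subtracting the
   generators a + i (i <= b), a descent on y shows that every m + y in N has level
   below t'.  Conversely, if m + y has level below t' but is missing from the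
   ordered set M, it can be added to M without changing the shadow, so m + y = P + a;
   then P - (m + b) = level y - b (mod a) is smaller than (m + t') - (m + b) = t' - b,
   against the maximality of the pivot's residue mod a.  So N and m + t' all lie in
   M, which is impossible since |N| = |M|. *)

Lemma bigmax_seq_mem (s : seq nat) : 0 < \max_(x <- s) x -> \max_(x <- s) x \in s.
Proof.
elim: s => [|y s IHs]; first by rewrite big_nil.
rewrite big_cons in_cons; move: IHs; set z := \max_(x <- s) x => IHs.
by case: (leqP y z) => [_ /IHs-> | _ _]; rewrite ?orbT ?eqxx.
Qed.

Lemma head_leq_sorted (s : seq nat) x : sorted ltn s -> x \in s -> head 0 s <= x.
Proof.
case: s => [|y s] //= s_sorted; rewrite in_cons => /predU1P[->//|xs].
by have /allP/(_ _ xs)/ltnW := order_path_min ltn_trans s_sorted.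
Qed.

Definition level (a b y : nat) : nat := y %% (a + b) + y %/ (a + b) * b.

Lemma level_small a b y : y < a + b -> level a b y = y.
Proof. by move=> lt_y; rewrite /level modn_small // divn_small // addn0. Qed.

Lemma level_divn_eq a b y : y %/ (a + b) * a + level a b y = y.
Proof. by rewrite {3}(divn_eq y (a + b)) /level; lia. Qed.

Lemma level_large a b y : 0 < a -> a + b <= y -> y %% (a + b) + b <= level a b y.
Proof. by move=> a_gt0 le_y; rewrite leq_add2l leq_pmull // divn_gt0 // ltn_addr. Qed.

Lemma level_sub a b y i : 0 < a -> a + b <= y -> i <= b -> y %% (a + b) < a + i ->
  level a b (y - (a + i)) + i = level a b y.
Proof.
move=> a_gt0 le_ab_y le_ib lt_r.
have ab_gt0 : 0 < a + b by lia.
have q_gt0 : 0 < y %/ (a + b) by rewrite divn_gt0.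
have lt_r_ab : y %% (a + b) < a + b by rewrite ltn_mod.
have Ey := divn_eq y (a + b).
move: q_gt0 lt_r lt_r_ab Ey; rewrite /level; set r := y %% (a + b).
case: (y %/ (a + b)) => [|q] //= _ lt_r lt_r_ab Ey.
have lt_r' : r + b - i < a + b by lia.
have -> : y - (a + i) = q * (a + b) + (r + b - i) by lia.
rewrite divnMDl // modnMDl (divn_small lt_r') (modn_small lt_r'); lia.
Qed.

Lemma interval_size_bound (s : seq nat) lo hi m n :
  lo <= m -> (forall x, (x \in s) = (lo <= x <= hi)) -> size s <= n -> hi < m + n.
Proof.
move=> le_lo_m mem_s size_s.
have : size (iota m (hi.+1 - m)) <= size s.
  apply: uniq_leq_size; first exact: iota_uniq.
  by move=> x; rewrite mem_iota mem_s => /andP[? ?]; apply/andP; lia.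
rewrite size_iota; lia.
Qed.

Lemma head_sort_leq (s : seq nat) y :
  y \in s -> (forall x, x \in s -> y <= x) -> head 0 (sort leq s) = y.
Proof.
move=> ys y_min; have sorted_s := sort_sorted leq_total s.
have : y \in sort leq s by rewrite mem_sort.
case E: (sort leq s) sorted_s => [|z s'] //= sorted_s.
have zs : z \in s by rewrite -(mem_sort leq) E mem_head.
rewrite in_cons => /predU1P[-> //|ys'].
have /allP/(_ _ ys') le_zy := order_path_min leq_trans sorted_s.
by apply/eqP; rewrite eqn_leq le_zy y_min.
Qed.

Lemma inS_gen a b i : i <= b -> inS a b (a + i).
Proof. by move=> le_ib; rewrite -[a + i]add0n; apply: inS_add => //; apply: inS0. Qed.

Lemma one_notin_S a b : 1 < a -> ~ inS a b 1.
Proof. by move=> lt_1a S1; move E: 1 S1 => d S1; case: S1 E => // x i _ _; lia. Qed.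

Lemma inD_step a b s alpha : inD a b s alpha ->
  alpha = s \/
  exists i, [/\ i <= b, alpha + (a + i) <= s & inD a b (s - (a + i)) alpha].
Proof.
case=> S_alpha le_alpha_s; move E: (s - alpha) => d S_d.
case: S_d E => [|x i le_ib S_x] E; first by left; lia.
right; exists i; split => //; first lia; split => //; first lia.
by have -> : s - (a + i) - alpha = x by lia.
Qed.

Lemma shadow_insert_high a b m M s : m + a + b <= s ->
  shadow a b m (sort leq (s :: M)) =i shadow a b m M.
Proof.
move=> le_s x; rewrite !mem_filter mem_sort in_cons.
by case: (x =P s) => [->|_] //=; rewrite ltnNge le_s andbF.
Qed.

Lemma pivot_offset_max a b m M P x : 0 < a -> 0 < P -> m + b <= P ->
  is_pivot a b m M P -> x \in M -> m + b <= x ->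
  (x - (m + b)) %% a <= (P - (m + b)) %% a.
Proof.
move=> a_gt0 P_gt0 le_P [_ [[lt_P _] | [_ P_max]]]; first by lia.
move=> xM le_x; set j0 := \max_(j <- Jset a b m M) j.
have j0_lt : j0 < a.
  rewrite -(prednK a_gt0) ltnS; apply/bigmax_leqP_seq => _ /mapP[y _ ->] _.
  by rewrite -ltnS prednK // ltn_mod.
have /bigmax_seq_mem : 0 < \max_(y <- wagon a b m M) y by rewrite -P_max.
rewrite -P_max mem_filter => /andP[/eqP P_mod _].
have -> : (P - (m + b)) %% a = j0.
  apply/eqP; rewrite -(modn_small j0_lt) -(eqn_modDl (m + b)) subnKC //.
  exact/eqP.
apply: leq_bigmax_seq => //.
by apply/mapP; exists x; rewrite ?mem_filter ?le_x.
Qed.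

Lemma shadow_iota_mem a b m M t y :
  shadow a b m M =i iota m t.+1 -> y <= t -> m + y \in M.
Proof.
move=> shadow_M le_y; have : m + y \in shadow a b m M by rewrite shadow_M mem_iota; lia.
by rewrite mem_filter => /andP[].
Qed.

Lemma pivot_shift_level a b m M t P y : 0 < a -> 0 < b -> t < a + b ->
  is_pivot a b m M P -> shadow a b m M =i iota m t.+1 ->
  a + b <= y -> P + a = m + y -> t <= level a b y.
Proof.
move=> a_gt0 b_gt0 lt_t P_pivot shadow_M le_ab_y P_eq.
rewrite leqNgt; apply/negP => lt_level.
have [q q_def] : exists q, y %/ (a + b) = q.+1.
  by exists (y %/ (a + b)).-1; rewrite prednK // divn_gt0 //; lia.
have b_le := level_large a_gt0 le_ab_y.
have Ey := level_divn_eq a b y; rewrite q_def mulSn in Ey.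
have le_P : m + b <= P by lia.
have P_gt0 : 0 < P by lia.
have := pivot_offset_max a_gt0 P_gt0 le_P P_pivot (shadow_iota_mem shadow_M (leqnn t)).
have -> : P - (m + b) = q * a + (level a b y - b) by lia.
have -> : m + t - (m + b) = t - b by lia.
rewrite modnMDl !modn_small; lia.
Qed.

Lemma conductor_gt0 a b c : 1 < a -> is_conductor a b c -> 0 < c.
Proof.
move=> lt_1a [S_ge _]; case: (posnP c) => // c0.
by case: (one_notin_S (b:=b) lt_1a); apply: S_ge; rewrite c0.
Qed.

Section Amenable.

Variables (a b c m r : nat) (M : seq nat).
Hypothesis M_amen : amenable a b c m r M.

Lemma amenable_ge x : x \in M -> m <= x.
Proof. by case: M_amen => [[sorted_M _ _ <-] _]; apply: head_leq_sorted. Qed.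

Lemma amenable_head : m \in M.
Proof. by case: M_amen => [[_ + _ <-] _]; case: (M) => // y s _; exact: mem_head. Qed.

Lemma amenable_uniq : uniq M.
Proof. by case: M_amen => [[/(sorted_uniq ltn_trans ltnn) ? _ _ _] _]. Qed.

Lemma amenable_insert s : inS a b s -> s \notin M -> m < s ->
  (forall i, i <= b -> m + (a + i) <= s -> s - (a + i) \in M) ->
  amenable a b c m r.+1 (sort leq (s :: M)).
Proof.
move=> S_s sM lt_m_s s_sub.
have [[sorted_M _ size_M _] [S_M le_2c D_closed]] := M_amen.
split; split => //.
- rewrite ltn_sorted_uniq_leq sort_uniq /= sM amenable_uniq.
  exact: (sort_sorted leq_total).
- by rewrite -size_eq0 size_sort.
- by rewrite size_sort /= size_M.
- apply: head_sort_leq; first by rewrite in_cons amenable_head orbT.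
  by move=> x; rewrite in_cons => /predU1P[->|/amenable_ge]; [exact: ltnW|].
- by move=> x; rewrite mem_sort in_cons => /predU1P[->|/S_M].
move=> x; rewrite mem_sort in_cons => /predU1P[->|xM] alpha D_alpha le_alpha.
  rewrite mem_sort in_cons.
  case: (inD_step D_alpha) => [-> | [i [le_ib le_alpha_s D_alpha']]].
    exact: predU1l.
  have le_a : m + (a + i) <= s by lia.
  by rewrite (D_closed _ (s_sub i le_ib le_a) alpha) ?orbT.
by rewrite mem_sort in_cons (D_closed x xM alpha) ?orbT.
Qed.

Section Conductor.

Hypotheses (lt_1a : 1 < a) (conductor_c : is_conductor a b c) (le_m : 2 * c - 1 <= m).

Let le_c_m : c <= m.
Proof. by have := conductor_gt0 lt_1a conductor_c; lia. Qed.

Lemma amenable_sub_gen x i : x \in M -> i <= b -> m + (a + i) <= x -> x - (a + i) \in M.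
Proof.
move=> xM le_ib le_x; have [_ [_ _ D_closed]] := M_amen.
apply: (D_closed x xM); last by lia.
have [S_ge _] := conductor_c.
split; [apply: S_ge; lia | lia |].
have -> : x - (x - (a + i)) = a + i by lia.
exact: inS_gen.
Qed.

Lemma level_lt_of_mem t y : t <= a + b - 1 ->
  {in shadow a b m M, forall x, x < m + t} -> m + y \in M -> level a b y < t.
Proof.
move=> le_t shadow_lt; elim/ltn_ind: y => y IHy yM.
have [lt_y | le_ab_y] := ltnP y (a + b).
  rewrite level_small //; suff : m + y < m + t by rewrite ltn_add2l.
  by apply: shadow_lt; rewrite mem_filter yM andbT; apply/andP; lia.
have lt_r : y %% (a + b) < a + b by rewrite ltn_mod; lia.
have b_le := level_large (ltnW lt_1a) le_ab_y.
set i := y %% (a + b) + 1 - a.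
have le_ib : i <= b by lia.
have lt_ri : y %% (a + b) < a + i by lia.
have level_y := level_sub (ltnW lt_1a) le_ab_y le_ib lt_ri.
have IH_sub : level a b (y - (a + i)) < t.
  apply: IHy; first by lia.
  have -> : m + (y - (a + i)) = m + y - (a + i) by lia.
  by apply: amenable_sub_gen; rewrite // leq_add2l; lia.
lia.
Qed.

Section Ordered.

Variables (t P : nat).
Hypotheses (b_gt0 : 0 < b) (lt_t : t < a + b).
Hypotheses (P_pivot : is_pivot a b m M P) (shadow_M : shadow a b m M =i iota m t.+1).
Hypothesis M_ext : forall s, inS a b s -> s \notin M ->
  amenable a b c m r.+1 (sort leq (s :: M)) ->
  shadow a b m (sort leq (s :: M)) =i shadow a b m M -> s = P + a.

Lemma mem_of_level_lt y : level a b y < t -> m + y \in M.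
Proof.
elim/ltn_ind: y => y IHy lt_level.
have [lt_y | le_ab_y] := ltnP y (a + b).
  by apply: (shadow_iota_mem shadow_M); rewrite level_small in lt_level; lia.
have r_le := level_large (ltnW lt_1a) le_ab_y.
have sub_mem i : i <= b -> m + (a + i) <= m + y -> m + y - (a + i) \in M.
  move=> le_ib _; have -> : m + y - (a + i) = m + (y - (a + i)) by lia.
  have lt_ri : y %% (a + b) < a + i by lia.
  have := level_sub (ltnW lt_1a) le_ab_y le_ib lt_ri.
  by move=> level_y; apply: IHy; lia.
case: (boolP (m + y \in M)) => // yM; exfalso.
have [S_ge _] := conductor_c.
have S_my : inS a b (m + y) by apply: S_ge; lia.
have lt_my : m < m + y by lia.
have high : m + a + b <= m + y by lia.
have shift := M_ext S_my yM (amenable_insert S_my yM lt_my sub_mem)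
  (shadow_insert_high M high).
have := pivot_shift_level (ltnW lt_1a) b_gt0 lt_t P_pivot shadow_M le_ab_y (esym shift).
lia.
Qed.

End Ordered.

End Conductor.

End Amenable.

Theorem proposition4p17 (a b c m r : nat) (M N : seq nat) (t : nat) :
  0 < b -> b < a -> is_conductor a b c -> 2 * c - 1 <= m ->
  ordered_amenable a b c m r M ->
  size (shadow a b m M) = t ->
  amenable a b c m r N ->
  (exists lo hi, lo <= m <= hi /\
     forall x, (x \in shadow a b m N) = (lo <= x <= hi)) ->
  t <= size (shadow a b m N).
Proof.
move=> b_gt0 lt_ba conductor_c le_m [M_amen [P [P_pivot [t' [lt_t' shadow_M] M_ext]]]]
  <- N_amen [lo [hi [/andP[le_lo _] shadow_N]]].
have lt_1a : 1 < a by lia.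
have -> : size (shadow a b m M) = t'.+1.
  rewrite -(size_iota m t'.+1); apply/perm_size/uniq_perm => //.
    exact: filter_uniq (amenable_uniq M_amen).
  exact: iota_uniq.
rewrite leqNgt; apply/negP => lt_shadow.
have shadow_N_lt : {in shadow a b m N, forall x, x < m + t'}.
  move=> x; rewrite shadow_N => /andP[_ le_x].
  exact: leq_ltn_trans le_x (interval_size_bound le_lo shadow_N _).
have level_N y : m + y \in N -> level a b y < t'.
  by apply: (level_lt_of_mem N_amen lt_1a conductor_c le_m _ shadow_N_lt); lia.
have N_sub_M : {subset m + t' :: N <= M}.
  move=> x; rewrite in_cons => /predU1P[-> | xN].
    exact: shadow_iota_mem shadow_M (leqnn t').
  have le_x := amenable_ge N_amen xN; rewrite -(subnKC le_x).
  have lt_t'_ab := leq_trans lt_t' (leq_subr 1 (a + b)).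
  apply: (mem_of_level_lt M_amen lt_1a conductor_c le_m b_gt0 lt_t'_ab P_pivot shadow_M
    M_ext).
  by apply: level_N; rewrite subnKC.
have tN : m + t' \notin N by apply/negP => /level_N; rewrite level_small; lia.
have uniq_tN : uniq (m + t' :: N) by rewrite /= tN (amenable_uniq N_amen).
have /= := uniq_leq_size uniq_tN N_sub_M.
by have [[_ _ -> _] _] := M_amen; have [[_ _ -> _] _] := N_amen; rewrite ltnn.
Qed.
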